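(* Let $d\ge 2$ be an integer with $d\ne 3$, let $w=(-1,1,\dots,1)^\intercal\in\mathbb R^{d+2}$, and let $\mathbf U=\mathbf U_n\cdots\mathbf U_2\mathbf U_1$ be a word with letters in $\{\mathbf R_1,\dots,\mathbf R_{d+2}\}$ (evaluated as a matrix product) such that $\mathbf U_1=\mathbf R_1$ and no two consecutive letters are equal. Then for every $1\le i\le d+2$ such that the letter $\mathbf R_i$ occurs in $\mathbf U$, we have $\sigma_i^w(\mathbf U)\ne 1$.
   Context: Let $\mathbf e\in\mathbb R^{d+2}$ be the all-ones vector, $\mathbf e_i$ the $i$-th standard basis vector and $\mathbf I$ the $(d+2)\times(d+2)$ identity. For $1\le i\le d+2$, $\mathbf R_i=\mathbf I+\frac{2}{d-1}\mathbf e_i\mathbf e^\intercal-\frac{2d}{d-1}\mathbf e_i\mathbf e_i^\intercal$ (equal to $\mathbf I$ except that row $i$ has diagonal entry $-1$ and off-diagonal entries $2/(d-1)$). For a matrix $\mathbf U$, $\sigma_i^w(\mathbf U)=\mathbf e_i^\intercal\mathbf U w$ is the $w$-weighted sum of the $i$-th row. *)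

From HB Require Import structures.
From mathcomp Require Import all_boot all_order all_algebra.
Set Implicit Arguments. Unset Strict Implicit. Unset Printing Implicit Defensive.
Import Order.TTheory GRing.Theory Num.Theory.
Local Open Scope ring_scope.

(* Indices 1..d+2 of the paper are the ordinals 0..d+1 of 'I_(d.+2). *)

Definition onesv (R : realFieldType) (n : nat) : 'cV[R]_n := const_mx 1.

Definition basisv (R : realFieldType) (n : nat) (i : 'I_n) : 'cV[R]_n :=
  \col_j (j == i)%:R.

Definition Rmat (R : realFieldType) (d : nat) (i : 'I_(d.+2)) : 'M[R]_(d.+2) :=
  1%:M + (2 / (d%:R - 1)) *: (basisv R i *m (onesv R d.+2)^T)
       - (2 * d%:R / (d%:R - 1)) *: (basisv R i *m (basisv R i)^T).

Definition wvec (R : realFieldType) (d : nat) : 'cV[R]_(d.+2) :=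
  \col_j (if j == ord0 then -1 else 1).

Definition sigmaw (R : realFieldType) (n : nat) (w : 'cV[R]_n) (i : 'I_n)
  (U : 'M[R]_n) : R :=
  ((basisv R i)^T *m U *m w) 0 0.

(* A word [:: i_1; ...; i_n] evaluates to R_{i_n} * ... * R_{i_1}. *)
Definition wordmx (R : realFieldType) (d : nat) (s : seq 'I_(d.+2)) : 'M[R]_(d.+2) :=
  foldl (fun M i => Rmat R i *m M) 1%:M s.

From HB Require Import structures.
From mathcomp Require Import all_boot all_order all_algebra.
From mathcomp Require Import ring lra zify.
Import Order.TTheory GRing.Theory Num.Theory.
Local Open Scope ring_scope.

(* Proof of Lemma 4.9.  Apply the letters of the word one by one to w: the
   reflection R_i changes only coordinate i of a vector v, replacing it by
   (2 S - (d+1) v_i) / (d-1) where S is the sum of the coordinates, and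
   sigma_i^w(U) is the i-th coordinate of U w.  So it suffices to find an
   invariant P(v, l) of the pair (current vector, last letter) which is
   preserved by applying any letter i <> l and forces v_l <> 1: then every
   coordinate touched so far is <> 1 (lemma [invariant_avoids_one]).
   Writing D = d - 1 > 0, three invariants cover all d <> 3:
   - D = 1 (d = 2): all coordinates are >= 1 and v_l is a maximum > 1;
   - D has an odd prime factor p: with a common denominator divisible by p,
     only the numerator of v_l is prime to p (p-adic dominance at l);
   - 4 | D: the same 2-adic dominance, which holds after the second letter.
   Since D = 2 is exactly d = 3, an arithmetic case split finishes. *)

Lemma odd_prime_ndvd_pow2 (p k : nat) : prime p -> odd p -> ~~ (p %| 2 ^ k)%N.
Proof.
move=> p_prime p_odd; rewrite Euclid_dvdX // negb_and; apply/orP; left.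
apply: contraL p_odd => /(dvdn_leq (isT : 0 < 2)%N) p_le2.
by have -> : p = 2%N by have := prime_gt1 p_prime; lia.
Qed.

Lemma odd_prime_divisor (m : nat) :
  odd m -> (1 < m)%N -> exists p, [/\ prime p, odd p & (p %| m)%N].
Proof.
move=> m_odd m_gt1; exists (pdiv m).
by rewrite pdiv_prime // pdiv_dvd (dvdn_odd (pdiv_dvd m)).
Qed.

Lemma nat_cases (n : nat) : (0 < n)%N ->
  [\/ n = 1%N, n = 2%N, (4 %| n)%N | exists p, [/\ prime p, odd p & (p %| n)%N]].
Proof.
move=> n_gt0; have [n_odd|n_even] := boolP (odd n).
  have [n_le1|n_gt1] := leqP n 1%N; first by constructor 1; lia.
  by constructor 4; exact: odd_prime_divisor.
have nE : n = (n./2 * 2)%N by rewrite muln2 -[LHS]odd_double_half (negbTE n_even).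
have [m_odd|m_even] := boolP (odd n./2).
  have [m_le1|m_gt1] := leqP n./2 1%N; first by constructor 2; lia.
  have [p [p_prime p_odd p_dvd]] := odd_prime_divisor _ m_odd m_gt1.
  by constructor 4; exists p; rewrite nE dvdn_mulr.
constructor 3; rewrite nE (_ : 4 = 2 * 2)%N // dvdn_pmul2r //.
by rewrite dvdn2.
Qed.

Section Reflections.
Variables (R : realFieldType) (d : nat).
Hypothesis d_gt1 : (1 < d)%N.

Lemma dm1E : (d%:R - 1 : R) = d.-1%:R.
Proof. by rewrite -[in LHS](@prednK d) ?(ltnW d_gt1) // -natr1 addrK. Qed.

Lemma dm1_neq0 : (d%:R - 1 : R) != 0.
Proof. by rewrite dm1E pnatr_eq0 -lt0n; lia. Qed.

Lemma Rmat_mulE (v : 'cV[R]_(d.+2)) (i j : 'I_(d.+2)) :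
  (Rmat R i *m v) j 0 = if j == i then
     (2 / (d%:R - 1)) * (\sum_k v k 0) - ((d%:R + 1) / (d%:R - 1)) * v i 0
   else v j 0.
Proof.
have ones_v : (onesv R d.+2)^T *m v = (\sum_k v k 0)%:M.
  apply/matrixP => a b; rewrite !ord1 !mxE.
  by apply: eq_bigr => k _; rewrite !mxE mul1r.
have basis_v : (basisv R i)^T *m v = (v i 0)%:M.
  apply/matrixP => a b; rewrite !ord1 !mxE (bigD1 i) //= big1 ?addr0.
    by rewrite !mxE eqxx mul1r.
  by move=> k /negbTE ki; rewrite !mxE ki mul0r.
rewrite /Rmat mulmxBl mulmxDl mul1mx -!scalemxAl -!mulmxA ones_v basis_v.
rewrite !mxE !big_ord1 !mxE /= !mulr1n.
case: eqP => [->|_]; last by rewrite !mul0r !mulr0 subr0 addr0.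
by rewrite !mul1r; field; rewrite dm1_neq0.
Qed.

Definition wordvec (v : 'cV[R]_(d.+2)) (t : seq 'I_(d.+2)) : 'cV[R]_(d.+2) :=
  foldl (fun v i => Rmat R i *m v) v t.

Lemma foldl_Rmat_mulmx (t : seq 'I_(d.+2)) (M : 'M[R]_(d.+2)) (v : 'cV[R]_(d.+2)) :
  foldl (fun M i => Rmat R i *m M) M t *m v = wordvec (M *m v) t.
Proof. by elim: t M => [|i t IH] M //=; rewrite IH mulmxA. Qed.

Lemma sigmaw_wordmx (w : 'cV[R]_(d.+2)) (i : 'I_(d.+2)) (s : seq 'I_(d.+2)) :
  sigmaw w i (wordmx R s) = wordvec w s i 0.
Proof.
rewrite /sigmaw /wordmx -mulmxA foldl_Rmat_mulmx mul1mx mxE (bigD1 i) //=.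
rewrite big1 ?addr0; first by rewrite !mxE eqxx mul1r.
by move=> k /negbTE ki; rewrite !mxE ki mul0r.
Qed.

Section Invariant.
Variable P : 'cV[R]_(d.+2) -> 'I_(d.+2) -> Prop.
Hypothesis P_step : forall v l i, P v l -> i != l -> P (Rmat R i *m v) i.
Hypothesis P_ne1 : forall v l, P v l -> v l 0 != 1.

Lemma invariant_avoids_one (t : seq 'I_(d.+2)) (v : 'cV[R]_(d.+2)) (l : 'I_(d.+2)) :
  path (fun a b : 'I_(d.+2) => a != b) l t -> P v l ->
  forall j, (j \in l :: t) || (v j 0 != 1) -> wordvec v t j 0 != 1.
Proof.
elim: t v l => [|i t IH] v l /=.
  by move=> _ Pvl j; rewrite mem_seq1 => /orP[/eqP ->|]; [exact: (P_ne1 _ _ Pvl)|].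
case/andP=> li lt Pvl j j_ok.
apply: (IH _ i lt (P_step _ _ _ Pvl _)); first by rewrite eq_sym.
have [-> | ji] := eqVneq j i; first by rewrite mem_head.
rewrite Rmat_mulE (negbTE ji) /=; move: j_ok; rewrite !inE (negbTE ji) /=.
by have [-> _|_ /= ->] := eqVneq j l; rewrite ?(P_ne1 _ _ Pvl) ?orbT.
Qed.
End Invariant.

Definition v1 : 'cV[R]_(d.+2) := Rmat R ord0 *m wvec R d.

Lemma v1E (j : 'I_(d.+2)) :
  v1 j 0 = if j == ord0 then (3 * d%:R + 1) / (d%:R - 1) else 1.
Proof.
have sum_w : \sum_k wvec R d k 0 = d%:R.
  rewrite big_ord_recl (eq_bigr (fun _ => 1)) => [|k _]; last by rewrite !mxE.
  by rewrite sumr_const card_ord !mxE eqxx -natr1 /=; ring.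
rewrite /v1 Rmat_mulE sum_w !mxE eqxx; case: eqP => // _.
by field; rewrite dm1_neq0.
Qed.

Lemma v1_0_neq1 : v1 ord0 0 != 1.
Proof.
rewrite v1E eqxx; apply/eqP => /(congr1 (fun x => x * (d%:R - 1))).
rewrite divfK ?dm1_neq0 // mul1r => /eqP; rewrite -subr_eq0.
have -> : 3 * d%:R + 1 - (d%:R - 1) = (2 * d + 2)%:R :> R.
  by rewrite natrD natrM; ring.
by rewrite pnatr_eq0; lia.
Qed.

Definition avoids_one_after_R1 : Prop :=
  forall t : seq 'I_(d.+2), path (fun a b : 'I_(d.+2) => a != b) ord0 t ->
  forall j, j \in ord0 :: t -> wordvec v1 t j 0 != 1.

Lemma invariant_from_v1 (P : 'cV[R]_(d.+2) -> 'I_(d.+2) -> Prop) :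
  (forall v l i, P v l -> i != l -> P (Rmat R i *m v) i) ->
  (forall v l, P v l -> v l 0 != 1) -> P v1 ord0 -> avoids_one_after_R1.
Proof.
move=> P_step P_ne1 P_v1 t tP j jt.
by apply: (@invariant_avoids_one P P_step P_ne1 t v1 ord0 tP P_v1); rewrite jt.
Qed.

Definition pdominant (p : nat) (v : 'cV[R]_(d.+2)) (l : 'I_(d.+2)) : Prop :=
  exists (N : nat) (u : 'I_(d.+2) -> int),
    [/\ (p %| N)%N, (0 < N)%N, (forall j, v j 0 = (u j)%:~R / N%:R),
        ~~ (p%:Z %| u l)%Z & forall j, j != l -> (p%:Z %| u j)%Z].

(* The dominant coordinate is not 1: its numerator is not the denominator. *)
Lemma pdominant_ne1 (p : nat) (v : 'cV[R]_(d.+2)) (l : 'I_(d.+2)) :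
  pdominant p v l -> v l 0 != 1.
Proof.
case=> N [u [pN N_gt0 vE pul _]]; rewrite vE; apply: contra pul => /eqP vl1.
have N_neq0 : N%:R != 0 :> R by rewrite pnatr_eq0 -lt0n.
have /intr_inj -> : (u l)%:~R = (N%:Z)%:~R :> R.
  by rewrite -(divfK N_neq0 (u l)%:~R) vl1 mul1r.
by rewrite dvdzE !absz_nat.
Qed.

Section PAdicStep.
Variables (p q : nat) (a b : int).
Hypotheses (p_prime : prime p) (p_dvd_q : (p %| q)%N) (q_gt0 : (0 < q)%N).
Hypothesis p_ndvd_a : ~~ (p%:Z %| a)%Z.
Hypothesis coef_sum : 2 / (d%:R - 1) = a%:~R / q%:R :> R.
Hypothesis coef_diag : (d%:R + 1) / (d%:R - 1) = b%:~R / q%:R :> R.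

(* Modulo p the new numerator at i is a times the old numerator at l. *)
Lemma pdominant_step (v : 'cV[R]_(d.+2)) (l i : 'I_(d.+2)) :
  pdominant p v l -> i != l -> pdominant p (Rmat R i *m v) i.
Proof.
case=> N [u [pN N_gt0 vE pul pu]] il.
have q_neq0 : q%:R != 0 :> R by rewrite pnatr_eq0 -lt0n.
have N_neq0 : N%:R != 0 :> R by rewrite pnatr_eq0 -lt0n.
pose u' j := if j == i then a * (\sum_k u k) - b * u i else q%:Z * u j.
exists (q * N)%N, u'; split.
- by rewrite dvdn_mulr.
- by rewrite muln_gt0 q_gt0.
- move=> j; rewrite Rmat_mulE /u'; case: eqP => _; last first.
    by rewrite vE rmorphM natrM /=; field; rewrite q_neq0 N_neq0.
  rewrite coef_sum coef_diag (eq_bigr _ (fun k _ => vE k)) vE -mulr_suml.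
  have sumE : (\sum_k u k)%:~R = \sum_k (u k)%:~R :> R by rewrite rmorph_sum.
  by rewrite rmorphB !rmorphM /= sumE; field; rewrite q_neq0 N_neq0.
- have rest : (p%:Z %| a * (\sum_(k | k != l) u k) - b * u i)%Z.
    by rewrite rpredB ?dvdz_mull ?pu // rpred_sum.
  rewrite /u' eqxx (bigD1 l) //= mulrDr -addrA (rpredDr _ rest).
  rewrite dvdzE abszM absz_nat Euclid_dvdM // negb_or.
  by move: p_ndvd_a pul; rewrite !dvdzE absz_nat => -> ->.
- by move=> j /negbTE ji; rewrite /u' ji dvdzE abszM !absz_nat dvdn_mulr.
Qed.
End PAdicStep.

(* Case: d - 1 has an odd prime factor p; already R_1 w is p-dominant at its
   first coordinate, with denominator d - 1 and numerator 3d + 1. *)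
Lemma odd_prime_case (p : nat) :
  prime p -> odd p -> (p %| d.-1)%N -> avoids_one_after_R1.
Proof.
move=> p_prime p_odd p_dvd.
have D_gt0 : (0 < d.-1)%N by lia.
have D_neq0 : d.-1%:R != 0 :> R by rewrite pnatr_eq0 -lt0n.
have p_ndvd2 : ~~ (p%:Z %| 2%:Z)%Z.
  by rewrite dvdzE !absz_nat (odd_prime_ndvd_pow2 _ 1).
apply: (invariant_from_v1 (pdominant p)).
- move=> v l i; apply: (pdominant_step p d.-1 2 d.+1%:Z) => //.
    by rewrite dm1E.
  by rewrite -pmulrn -dm1E -natr1.
- exact: pdominant_ne1.
- exists d.-1, (fun k => if k == ord0 then (3 * d + 1)%:Z else d.-1%:Z); split => //.
  + move=> k; rewrite v1E; case: eqP => _; last by rewrite divff.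
    by rewrite -pmulrn -dm1E natrD natrM; field; rewrite dm1_neq0.
  + rewrite eqxx dvdzE absz_nat (_ : 3 * d + 1 = 3 * d.-1 + 4)%N; last by lia.
    by rewrite dvdn_addr ?dvdn_mull // (odd_prime_ndvd_pow2 _ 2).
  + by move=> k /negbTE ->; rewrite dvdzE absz_nat.
Qed.

(* Case: 4 | d - 1, say d = 4N + 1.  After a second letter i, the vector is
   2-dominant at i with denominator 2N^2. *)
Lemma four_dvd_case (N : nat) : (d.-1 = 4 * N)%N -> avoids_one_after_R1.
Proof.
move=> DE t tP j jt.
have N_gt0 : (0 < N)%N by lia.
have N_neq0 : N%:R != 0 :> R by rewrite pnatr_eq0 -lt0n.
have Dm1 : d%:R - 1 = 4 * N%:R :> R by rewrite dm1E DE natrM.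
have dE : d%:R = 4 * N%:R + 1 :> R by rewrite -Dm1 subrK.
case: t tP jt => [_|i t] /=.
  by rewrite mem_seq1 => /eqP ->; exact: v1_0_neq1.
case/andP=> neq_0i tP jt; have i_neq0 : i != ord0 by rewrite eq_sym.
have step := pdominant_step 2 (2 * N) 1 (2 * N + 1)%:Z.
apply: (invariant_avoids_one (pdominant 2) _ _ _ _ _ tP _ j).
- move=> v l k; apply: step => //; first by rewrite dvdn_mulr.
  + by rewrite muln_gt0 N_gt0.
  + by rewrite -pmulrn Dm1 natrM; field; rewrite N_neq0.
  + by rewrite -pmulrn Dm1 dE natrD !natrM; field; rewrite N_neq0.
- exact: pdominant_ne1.
- have sum_v1 : \sum_k v1 k 0 = (3 * N%:R + 1) / N%:R + 4 * N%:R + 2.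
    rewrite big_ord_recl (eq_bigr (fun _ => 1)) => [|k _]; last by rewrite v1E.
    by rewrite sumr_const card_ord v1E eqxx Dm1 -[d.+1%:R]natr1 dE; field; rewrite N_neq0.
  exists (2 * N * N)%N, (fun k => if k == i then (2 * N * N + 4 * N + 1)%N%:Z
           else if k == ord0 then (2 * N * (3 * N + 1))%N%:Z else (2 * N * N)%N%:Z).
  split => //.
  + by rewrite -mulnA dvdn_mulr.
  + by rewrite !muln_gt0 N_gt0.
  + move=> k; rewrite Rmat_mulE; have [_|_] := eqVneq k i.
      rewrite sum_v1 v1E (negbTE i_neq0) Dm1 dE /= -pmulrn !natrD !natrM.
      by field; rewrite N_neq0.
    rewrite v1E; case: eqP => _; rewrite -pmulrn; last by rewrite divff // pnatr_eq0; lia.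
    by rewrite Dm1 dE !natrM natrD; field; rewrite N_neq0.
  + by rewrite eqxx dvdzE absz_nat; lia.
  + by move=> k /negbTE ->; case: eqP => _; rewrite dvdzE absz_nat; lia.
- move: jt; rewrite in_cons; case: (j \in i :: t) => //; rewrite orbF => /eqP ->.
  by rewrite Rmat_mulE (negbTE neq_0i) v1_0_neq1 orbT.
Qed.

End Reflections.

(* Case d = 2, where the reflection acts by v_i |-> 2 S - 3 v_i.  Dominance:
   all coordinates are >= 1 and the coordinate l is a maximum > 1. *)
Definition dominant (R : realFieldType) (v : 'cV[R]_4) (l : 'I_4) : Prop :=
  [/\ forall j, 1 <= v j 0, forall j, v j 0 <= v l 0 & 1 < v l 0].

(* The new v_i = 2 v_l - v_i + 2 (other coordinates) is >= v_l. *)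
Lemma dominant_step (R : realFieldType) (v : 'cV[R]_4) (l i : 'I_4) :
  dominant R v l -> i != l -> dominant R (Rmat R i *m v) i.
Proof.
case=> v_ge1 v_le vl_gt1 il.
set rest := \sum_(k | (k != l) && (k != i)) v k 0.
have rest_ge0 : 0 <= rest by apply: sumr_ge0 => k _; have := v_ge1 k; lra.
have newE : (Rmat R i *m v) i 0 = 2 * (v i 0 + v l 0 + rest) - 3 * v i 0.
  rewrite Rmat_mulE // eqxx (bigD1 l) //= (bigD1 i) //=.
  by rewrite (_ : 2%:R - 1 = 1 :> R) ?divr1 /rest; [ring | lra].
have new_ge : v l 0 <= (Rmat R i *m v) i 0 by rewrite newE; have := v_le i; lra.
have other k : k != i -> (Rmat R i *m v) k 0 = v k 0.
  by move=> /negbTE ki; rewrite Rmat_mulE // ki.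
split; last by lra.
- by move=> k; have [->|/other ->] := eqVneq k i; [lra | exact: v_ge1].
- by move=> k; have [->|/other ->] := eqVneq k i; [lra | have := v_le k; lra].
Qed.

Lemma d2_case (R : realFieldType) : avoids_one_after_R1 R 2.
Proof.
have v1E2 (k : 'I_4) : v1 R 2 k 0 = if k == ord0 then 7 else 1.
  by rewrite v1E //; case: eqP => // _; field.
apply: (@invariant_from_v1 R 2 isT (dominant R)) => //.
- exact: dominant_step.
- by move=> v l [_ _ /gt_eqF ->].
split=> [k|k|]; rewrite !v1E2 ?eqxx; try case: eqP => _; lra.
Qed.

Theorem lemma4p9 (R : realFieldType) (d : nat) (hd2 : (2 <= d)%N) (hd3 : d != 3%N)
  (t : seq 'I_(d.+2))
  (hdist : path (fun a b : 'I_(d.+2) => a != b) ord0 t) :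
  forall i : 'I_(d.+2), i \in ord0 :: t ->
    sigmaw (wvec R d) i (wordmx R (ord0 :: t)) != 1.
Proof.
move=> i it; rewrite sigmaw_wordmx; move: i it.
suff : avoids_one_after_R1 R d by apply.
have [D1|D2|/divnK D4|[p [p_prime p_odd p_dvd]]] := nat_cases d.-1 (ltac:(lia)).
- have -> : d = 2%N by lia.
  exact: d2_case.
- by move/eqP: hd3; lia.
- by apply: (four_dvd_case R d hd2 (d.-1 %/ 4)); rewrite mulnC D4.
- exact: (odd_prime_case R d hd2 p p_prime p_odd p_dvd).
Qed.
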